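(* Fix $a\in\mathbb R$, $b>0$, $c>0$ and a mean $M_1$. Consider the two-player Bayesian contest with efforts restricted to $[0,\infty)$ in which cost types are i.i.d. draws from a distribution $F$ with support $[\alpha,\beta]\subset(0,c)$, mean $M_1$ and variance $\sigma_\theta^2>0$, and a type-$\theta$ player choosing $\tilde x$ against opponent strategy $x(\cdot)$ receives $\int[P(\tilde x,x(\theta'))-\theta\tilde x]\,dF(\theta')$ with $P(x,y)=\tfrac12+(x-y)\bigl(c-b(x+y)+axy\bigr)$. Restrict attention to priors $F$ for which the contest is fully active, meaning that the unique symmetric Bayesian Nash equilibrium $x_F$ of the affine relaxation (actions in $\mathbb R$; for $a=0$ it is $x_F(\theta)=\frac{c-\theta}{2b}$) is nonnegative on $[\alpha,\beta]$, so that it is an equilibrium with nonnegative efforts. Then, among such fully active priors with mean $M_1$, expected equilibrium effort $E_F[x_F(\theta)]$ is decreasing in the type variance $\sigma_\theta^2$ if $a>0$ (suppression), increasing in $\sigma_\theta^2$ if $a<0$ (empowerment), and independent of $\sigma_\theta^2$ if $a=0$.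
   Context: The affine relaxation is the same Bayesian contest with actions allowed in all of $\mathbb R$ and the raw (untruncated) $P$. For $a\neq0$ its unique symmetric equilibrium is affine in type and its expected effort depends on $F$ only through its mean and variance. *)

From HB Require Import structures.
From mathcomp Require Import all_boot all_order all_algebra.
From mathcomp Require Import all_classical all_reals all_analysis.
Set Implicit Arguments. Unset Strict Implicit. Unset Printing Implicit Defensive.
Import Order.TTheory GRing.Theory Num.Theory.
Local Open Scope classical_set_scope.
Local Open Scope ring_scope.

Section Contest.
Context {R : realType}.

Definition winP (a b c : R) (x y : R) : R :=
  2^-1 + (x - y) * (c - b * (x + y) + a * x * y).

Definition prior_ok (c M1 : R) (F : probability R R) (alpha beta : R) : Prop :=
  [/\ 0 < alpha /\ alpha < beta /\ beta < c,
      F [set` `[alpha, beta]] = 1%E,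
      (forall t, alpha <= t <= beta -> forall e : R, 0 < e ->
          (0 < F [set` `](t - e)%R, (t + e)%R[])%E),
      (\int[F]_t (t%:E) = M1%:E)%E
    & (0 < \int[F]_t (((t - M1) ^+ 2)%:E))%E ].

Definition type_var (M1 : R) (F : probability R R) : \bar R :=
  (\int[F]_t (((t - M1) ^+ 2)%:E))%E.

(** Expected payoff of a type-theta player choosing xt against the
    opponent strategy x, in the affine relaxation (raw P, actions in R). *)
Definition payoff (a b c : R) (F : probability R R) (x : R -> R)
    (theta xt : R) : \bar R :=
  (\int[F]_t ((winP a b c xt (x t) - theta * xt)%:E))%E.

(** x is a symmetric Bayesian Nash equilibrium of the affine relaxation:
    for every type theta in the support [alpha,beta], x theta is a best
    response among all real actions, given that the opponent plays x.
    (Measurability/integrability of x and x^2 ensure expected payoffs are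
    well defined and finite.) *)
Definition affine_sym_BNE (a b c : R) (F : probability R R) (alpha beta : R)
    (x : R -> R) : Prop :=
  [/\ measurable_fun setT x,
      F.-integrable setT (fun t => (x t)%:E),
      F.-integrable setT (fun t => ((x t) ^+ 2)%:E)
    & forall theta, alpha <= theta <= beta -> forall xt : R,
        (payoff a b c F x theta xt <= payoff a b c F x theta (x theta))%E ].

Definition fully_active (alpha beta : R) (x : R -> R) : Prop :=
  forall theta, alpha <= theta <= beta -> 0 <= x theta.

Definition exp_effort (F : probability R R) (x : R -> R) : \bar R :=
  (\int[F]_t ((x t)%:E))%E.

End Contest.

From HB Require Import structures.
From mathcomp Require Import all_boot all_order all_algebra.
From mathcomp Require Import all_classical all_reals all_analysis.
From mathcomp Require Import measurable_realfun ring lra.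
Set Implicit Arguments. Unset Strict Implicit. Unset Printing Implicit Defensive.
Import Order.TTheory GRing.Theory Num.Theory.
Local Open Scope classical_set_scope.
Local Open Scope ring_scope.

(* Against an opponent with moments m = E[x] and q = E[x^2], the expected
   payoff of the affine relaxation is a quadratic in one's own action.  Best
   responses at the two distinct endpoints of the support force it to be
   strictly concave, so every type satisfies
     theta = c - a q - 2 (b - a m) x(theta),   with b - a m > 0.
   Taking the mean and the variance of the types gives
     M1 = c - a q - 2 (b - a m) m   and   Var = 4 (b - a m)^2 (q - m^2),
   and eliminating q leaves  a Var = 4 (b - a m)^2 (c - M1 - 2 b m + a m^2).
   The right-hand side is strictly decreasing in m wherever b - a m > 0 and
   it has the sign of a, so a larger variance lowers the mean effort when
   a > 0 and raises it when a < 0; for a = 0 it pins m = (c - M1) / (2 b). *)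

Section QuadraticMaximum.
Variable R : realFieldType.

Lemma quad_nonpos_coef (A L : R) :
  (forall t, A * t ^+ 2 + L * t <= 0) -> A <= 0 /\ L = 0.
Proof.
move=> H; have A_le0 : A <= 0 by have := H 1; have := H (-1); lra.
split=> //; have lt0A : 0 < 1 - A by lra.
have := H (L / (1 - A)).
have -> : A * (L / (1 - A)) ^+ 2 + L * (L / (1 - A)) = (L / (1 - A)) ^+ 2.
  by field; rewrite gt_eqF.
move=> sq_le0; have : (L / (1 - A)) ^+ 2 == 0 by rewrite eq_le sq_le0 sqr_ge0.
by rewrite sqrf_eq0 mulf_eq0 invr_eq0 (gt_eqF lt0A) orbF => /eqP.
Qed.

Lemma quad_argmax (A B y : R) :
  (forall z, A * z ^+ 2 + B * z <= A * y ^+ 2 + B * y) ->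
  A <= 0 /\ 2 * A * y + B = 0.
Proof.
move=> H; apply: quad_nonpos_coef => t; have := H (y + t).
have -> : A * (y + t) ^+ 2 + B * (y + t)
          = A * y ^+ 2 + B * y + (A * t ^+ 2 + (2 * A * y + B) * t) by ring.
lra.
Qed.

End QuadraticMaximum.

Section Moments.
Context {R : realType} (F : probability R R).

Lemma ae_eq_itv (alpha beta : R) (f g : R -> \bar R) :
  F [set` `[alpha, beta]] = 1%E ->
  (forall t, alpha <= t <= beta -> f t = g t) -> ae_eq F setT f g.
Proof.
move=> F1 fg; exists (~` [set` `[alpha, beta]]); split.
- exact: measurableC (measurable_itv _).
- have := probability_setC F (measurable_itv `[alpha, beta]).
  by rewrite F1 subee.
- move=> t /= fgt t_in; apply: fgt => _; apply: fg.
  by move: t_in; rewrite /= in_itv.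
Qed.

Variable x : R -> R.
Hypotheses (mx : measurable_fun setT x)
  (ix : F.-integrable setT (fun t => (x t)%:E))
  (ix2 : F.-integrable setT (fun t => (x t ^+ 2)%:E)).

Lemma integral_quadratic (A B C : R) :
  (\int[F]_t ((A + B * x t + C * x t ^+ 2)%:E) =
   (A + B * fine (\int[F]_t (x t)%:E)
      + C * fine (\int[F]_t (x t ^+ 2)%:E))%:E)%E.
Proof.
have f1 := integrable_fin_num measurableT ix.
have f2 := integrable_fin_num measurableT ix2.
rewrite (eq_integral
  (fun t => A%:E + (B%:E * (x t)%:E + C%:E * (x t ^+ 2)%:E)))%E;
  last by move=> t _; rewrite -!EFinM -!EFinD addrA.
have iA := finite_measure_integrable_cst F A measurableT.
rewrite integralD //; last by apply: integrableD => //; exact: integrableZl.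
rewrite integralD //; try exact: integrableZl.
rewrite integralZl // integralZl // integral_cst //.
rewrite [X in (A%:E * X)%E](_ : _ = 1%E) ?mule1; last exact: probability_setT.
by rewrite -(fineK f1) -(fineK f2) -!EFinM -!EFinD addrA.
Qed.

Lemma integral_quadratic_on (alpha beta : R) (g : R -> R) (A B C : R) :
  F [set` `[alpha, beta]] = 1%E -> measurable_fun setT g ->
  (forall t, alpha <= t <= beta -> g t = A + B * x t + C * x t ^+ 2) ->
  (\int[F]_t (g t)%:E =
   (A + B * fine (\int[F]_t (x t)%:E)
      + C * fine (\int[F]_t (x t ^+ 2)%:E))%:E)%E.
Proof.
move=> F1 mg gq; rewrite -integral_quadratic.
apply: ae_eq_integral => //.
- exact/measurable_EFinP.
- apply/measurable_EFinP; apply: measurable_funD; first apply: measurable_funD.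
  + exact: measurable_cst.
  + exact: measurable_funM (measurable_cst _) mx.
  + exact: measurable_funM (measurable_cst _) (measurable_funX _ mx).
- by apply: (ae_eq_itv F1) => t /gq ->.
Qed.

End Moments.

Section ScaledVariance.
Variable R : realFieldType.

(* a * Var(theta) in terms of the mean effort m, see sym_BNE_scaled_var *)
Definition scaled_var_of_effort (a b c M1 m : R) : R :=
  4 * (b - a * m) ^+ 2 * (c - M1 - 2 * b * m + a * m ^+ 2).

Lemma effort_gt_of_scaled_var_lt (a b c M1 m1 m2 : R) :
  0 < b - a * m1 -> 0 < b - a * m2 ->
  0 < a * scaled_var_of_effort a b c M1 m1 ->
  0 < a * scaled_var_of_effort a b c M1 m2 ->
  scaled_var_of_effort a b c M1 m1 < scaled_var_of_effort a b c M1 m2 ->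
  m2 < m1.
Proof.
rewrite /scaled_var_of_effort.
set D1 := b - a * m1; set D2 := b - a * m2.
set H1 := c - M1 - 2 * b * m1 + a * m1 ^+ 2.
set H2 := c - M1 - 2 * b * m2 + a * m2 ^+ 2.
move=> D1_gt0 D2_gt0 pos1 pos2 lt12; rewrite ltNge; apply/negP => m12.
have sq1 : 0 < 4 * D1 ^+ 2 by rewrite mulr_gt0 // exprn_gt0.
have sq2 : 0 < 4 * D2 ^+ 2 by rewrite mulr_gt0 // exprn_gt0.
have dH : H1 - H2 = (m2 - m1) * (D1 + D2) by rewrite /H1 /H2 /D1 /D2; ring.
have H21 : H2 <= H1 by nra.
suff : 4 * D2 ^+ 2 * H2 <= 4 * D1 ^+ 2 * H1 by lra.
have [a_gt0 | a_lt0 | a0] := ltgtP 0 a;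
  last by move: pos1; rewrite -a0 mul0r ltxx.
- have D21 : D2 <= D1 by rewrite /D1 /D2; nra.
  have D21sq : 4 * D2 ^+ 2 <= 4 * D1 ^+ 2 by nra.
  have H2_gt0 : 0 < H2 by move: pos2; rewrite !pmulr_rgt0.
  by apply: ler_pM; lra.
- have D12 : D1 <= D2 by rewrite /D1 /D2; nra.
  have D12sq : 4 * D1 ^+ 2 <= 4 * D2 ^+ 2 by nra.
  have H1_lt0 : H1 < 0 by move: pos1; rewrite nmulr_rgt0 // pmulr_rlt0.
  apply: (le_trans (ler_wpM2l (ltW sq2) H21)).
  by apply: ler_wnM2r => //; exact: ltW.
Qed.

Lemma scaled_var_of_effort0 (b c M1 m : R) : 0 < b ->
  scaled_var_of_effort 0 b c M1 m = 0 -> m = (c - M1) / (2 * b).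
Proof.
rewrite /scaled_var_of_effort !mul0r !subr0 addr0 => b_gt0 /eqP.
rewrite mulf_eq0 mulf_eq0 pnatr_eq0 expf_eq0 (gt_eqF b_gt0) andbF /= subr_eq0.
by move=> /eqP ->; field; rewrite gt_eqF.
Qed.

End ScaledVariance.

Section SymmetricEquilibrium.
Context {R : realType} (a b c M1 : R) (F : probability R R) (alpha beta : R)
  (x : R -> R).
Hypotheses (hF : prior_ok c M1 F alpha beta)
  (hx : affine_sym_BNE a b c F alpha beta x).

Let m := fine (\int[F]_t (x t)%:E).
Let q := fine (\int[F]_t (x t ^+ 2)%:E).

Lemma payoff_quadratic theta xt : payoff a b c F x theta xt =
  ((a * m - b) * xt ^+ 2 + (c - a * q - theta) * xt
   + (2^-1 - c * m + b * q))%:E.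
Proof.
have [mx ix ix2 _] := hx; rewrite /payoff.
rewrite (eq_integral (fun t => ((2^-1 + c * xt - b * xt ^+ 2 - theta * xt)
    + (a * xt ^+ 2 - c) * x t + (b - a * xt) * x t ^+ 2)%:E)); last first.
  by move=> t _; congr EFin; rewrite /winP; ring.
by rewrite integral_quadratic //; congr EFin; rewrite -/m -/q; ring.
Qed.

Lemma sym_BNE_first_order theta : alpha <= theta <= beta ->
  a * m - b <= 0 /\ 2 * (a * m - b) * x theta + (c - a * q - theta) = 0.
Proof.
have [_ _ _ best] := hx; move=> theta_in; apply: quad_argmax => z.
by have := best theta theta_in z; rewrite !payoff_quadratic lee_fin; lra.
Qed.

Lemma sym_BNE_slope_gt0 : 0 < b - a * m.
Proof.
have [[_ [lt_ab _]] _ _ _ _] := hF.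
have [le0 foc_alpha] := @sym_BNE_first_order alpha ltac:(apply/andP; lra).
have [_ foc_beta] := @sym_BNE_first_order beta ltac:(apply/andP; lra).
(* a flat payoff would force alpha = c - a q = beta *)
have nonflat : a * m - b != 0.
  apply: contraTneq lt_ab => flat; move: foc_alpha foc_beta.
  by rewrite flat !mulr0 !mul0r -leNgt; lra.
suff : a * m - b < 0 by lra.
by rewrite lt_neqAle nonflat le0.
Qed.

Lemma sym_BNE_type_affine theta : alpha <= theta <= beta ->
  theta = c - a * q - 2 * (b - a * m) * x theta.
Proof. by move=> /sym_BNE_first_order[_ foc]; lra. Qed.

Lemma sym_BNE_mean : M1 = c - a * q - 2 * (b - a * m) * m.
Proof.
have [_ F1 _ mean_M1 _] := hF; have [mx ix ix2 _] := hx.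
rewrite (integral_quadratic_on mx ix ix2 (A := c - a * q)
  (B := - 2 * (b - a * m)) (C := 0) F1 (@measurable_id _ _ setT)) in mean_M1;
  last first.
  by move=> t /sym_BNE_type_affine {1}->; ring.
by case: mean_M1 => <-; rewrite -/m; ring.
Qed.

Lemma sym_BNE_type_var :
  type_var M1 F = (4 * (b - a * m) ^+ 2 * (q - m ^+ 2))%:E.
Proof.
have [_ F1 _ _ _] := hF; have [mx ix ix2 _] := hx.
have mg : measurable_fun setT (fun t : R => (t - M1) ^+ 2).
  exact/measurable_funX/measurable_funB/measurable_cst.
rewrite /type_var (integral_quadratic_on mx ix ix2
  (A := (c - a * q - M1) ^+ 2) (B := - 4 * (b - a * m) * (c - a * q - M1))
  (C := 4 * (b - a * m) ^+ 2) F1 mg); last first.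
  by move=> t /sym_BNE_type_affine {1}->; ring.
by rewrite -/m -/q {1 2}sym_BNE_mean; congr EFin; ring.
Qed.

Lemma sym_BNE_scaled_var :
  a * (4 * (b - a * m) ^+ 2 * (q - m ^+ 2)) = scaled_var_of_effort a b c M1 m.
Proof. by rewrite /scaled_var_of_effort sym_BNE_mean; ring. Qed.

Lemma sym_BNE_effort_var : exists m s, [/\ exp_effort F x = m%:E,
  type_var M1 F = s%:E, 0 < s, 0 < b - a * m
  & a * s = scaled_var_of_effort a b c M1 m].
Proof.
have [_ _ _ _ var_gt0] := hF; have [_ ix _ _] := hx.
exists m, (4 * (b - a * m) ^+ 2 * (q - m ^+ 2)); split.
- by rewrite /exp_effort fineK // (integrable_fin_num measurableT ix).
- exact: sym_BNE_type_var.
- by rewrite -lte_fin -sym_BNE_type_var.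
- exact: sym_BNE_slope_gt0.
- exact: sym_BNE_scaled_var.
Qed.

End SymmetricEquilibrium.

Theorem theorem4 (R : realType) (a b c M1 : R) (hb : 0 < b) (hc : 0 < c)
    (F1 F2 : probability R R) (alpha1 beta1 alpha2 beta2 : R)
    (x1 x2 : R -> R) :
  prior_ok c M1 F1 alpha1 beta1 ->
  prior_ok c M1 F2 alpha2 beta2 ->
  affine_sym_BNE a b c F1 alpha1 beta1 x1 ->
  affine_sym_BNE a b c F2 alpha2 beta2 x2 ->
  fully_active alpha1 beta1 x1 ->
  fully_active alpha2 beta2 x2 ->
  [/\ (0 < a -> (type_var M1 F1 < type_var M1 F2)%E ->
         (exp_effort F2 x2 < exp_effort F1 x1)%E),
      (a < 0 -> (type_var M1 F1 < type_var M1 F2)%E ->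
         (exp_effort F1 x1 < exp_effort F2 x2)%E)
    & (a = 0 -> exp_effort F1 x1 = exp_effort F2 x2)].
Proof.
(* full activity only makes x1, x2 equilibria of the contest with
   nonnegative efforts; the comparison holds in the affine relaxation *)
move=> F1_ok F2_ok x1_BNE x2_BNE _ _.
have [m1 [s1 [-> -> s1_gt0 D1_gt0 avar1]]] := sym_BNE_effort_var F1_ok x1_BNE.
have [m2 [s2 [-> -> s2_gt0 D2_gt0 avar2]]] := sym_BNE_effort_var F2_ok x2_BNE.
have aas_gt0 s : 0 < s -> a != 0 -> 0 < a * (a * s).
  by move=> s_gt0 a_neq0; rewrite mulrA pmulr_lgt0 // -expr2 exprn_even_gt0.
rewrite !lte_fin; split.
- move=> a_gt0 s12; have a_neq0 : a != 0 by rewrite gt_eqF.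
  apply: (effort_gt_of_scaled_var_lt (c := c) (M1 := M1) D1_gt0 D2_gt0).
  all: rewrite -?avar1 -?avar2.
  + exact: aas_gt0.
  + exact: aas_gt0.
  + by rewrite ltr_pM2l.
- move=> a_lt0 s12; have a_neq0 : a != 0 by rewrite lt_eqF.
  apply: (effort_gt_of_scaled_var_lt (c := c) (M1 := M1) D2_gt0 D1_gt0).
  all: rewrite -?avar1 -?avar2.
  + exact: aas_gt0.
  + exact: aas_gt0.
  + by rewrite ltr_nM2l.
- move=> a0; rewrite a0 !mul0r in avar1 avar2.
  by rewrite (scaled_var_of_effort0 hb (esym avar1))
             (scaled_var_of_effort0 hb (esym avar2)).
Qed.
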